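(* For every $\varepsilon > 0$, on any instance of MDMS the algorithm $\mathrm{GIST}(V, g, k, \varepsilon)$ outputs a set $S \subseteq V$ with $|S| \le k$ and $$f(S) \ge \left(\tfrac{1}{2} - \varepsilon\right)\cdot \mathrm{OPT},$$ and it uses $O(nk \log_{1+\varepsilon}(1/\varepsilon))$ value-oracle queries to $g$.
   Context: Let $V$ be a finite set of $n$ points in a metric space with metric $\mathrm{dist}$, and let $d_{\max} = \max_{u,v \in V}\mathrm{dist}(u,v)$. For $u \in V$ and $S \subseteq V$ let $\mathrm{dist}(u,S) = \min_{v \in S}\mathrm{dist}(u,v)$, with $\mathrm{dist}(u,\emptyset) = \infty$. The max-min diversity is $\mathrm{div}(S) = \min_{u,v \in S,\, u \ne v}\mathrm{dist}(u,v)$ if $|S| \ge 2$, and $\mathrm{div}(S) = d_{\max}$ if $|S| \le 1$. Let $g : 2^V \to \mathbb{R}_{\ge 0}$ be a nonnegative monotone submodular function (accessed via a value oracle), let $\lambda \ge 0$, let $k \ge 1$ be an integer, and let $f(S) = g(S) + \lambda\cdot \mathrm{div}(S)$. The MDMS problem is to maximize $f(S)$ subject to $S \subseteq V$, $|S| \le k$; $\mathrm{OPT}$ denotes the optimal value. $\mathrm{GreedyIndependentSet}(V,g,d,k)$: initialize $S \gets \emptyset$; for $i = 1,\dots,k$: let $C = \{v \in V\setminus S : \mathrm{dist}(v,S) \ge d\}$; if $C = \emptyset$ return $S$; otherwise pick $t \in \arg\max_{v \in C} \big(g(S\cup\{v\}) - g(S)\big)$ (ties broken arbitrarily) and set $S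 \gets S \cup\{t\}$. After the loop, return $S$. $\mathrm{GIST}(V,g,k,\varepsilon)$: set $S \gets \mathrm{GreedyIndependentSet}(V,g,0,k)$. Let $T = \{u,v\}$ be two points with $\mathrm{dist}(u,v) = d_{\max}$; if $f(T) > f(S)$ and $k \ge 2$, set $S \gets T$. Let $D = \{(1+\varepsilon)^i \cdot \varepsilon d_{\max}/2 : i \in \mathbb{Z}_{\ge 0},\ (1+\varepsilon)^i \le 2/\varepsilon\}$. For each $d \in D$: set $T \gets \mathrm{GreedyIndependentSet}(V,g,d,k)$ and if $f(T) \ge f(S)$ set $S \gets T$. Return $S$. *)

From HB Require Import structures.
From mathcomp Require Import all_boot all_order all_algebra.
From mathcomp Require Import reals.
From mathcomp Require exp.
Set Implicit Arguments. Unset Strict Implicit. Unset Printing Implicit Defensive.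
Import Order.TTheory GRing.Theory Num.Theory.
Local Open Scope ring_scope.

Section MDMS.
Variables (R : realType) (V : finType).

Definition is_metric (dist : V -> V -> R) : Prop :=
  [/\ forall x y, dist x y = 0 <-> x = y,
      forall x y, dist x y = dist y x &
      forall x y z, dist x z <= dist x y + dist y z].

Definition nonneg_fun (g : {set V} -> R) : Prop := forall A, 0 <= g A.
Definition monotone_fun (g : {set V} -> R) : Prop :=
  forall A B : {set V}, A \subset B -> g A <= g B.
Definition submodular (g : {set V} -> R) : Prop :=
  forall A B : {set V}, g (A :|: B) + g (A :&: B) <= g A + g B.

Variable dist : V -> V -> R.

(* d_max = max_{u,v} dist(u,v) (dist is nonnegative, so 0 is a neutral start) *)
Definition dmax : R := \big[Num.max/0]_(u : V) \big[Num.max/0]_(v : V) dist u v.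

(* div(S) = min_{u<>v in S} dist(u,v) if |S| >= 2, d_max otherwise.
   (every distance is <= d_max, so d_max is a neutral start for the min) *)
Definition div (S : {set V}) : R :=
  if (2 <= #|S|)%N then
    \big[Num.min/dmax]_(u in S) \big[Num.min/dmax]_(v in S | v != u) dist u v
  else dmax.

Variables (g : {set V} -> R) (lam : R) (k : nat).

Definition fobj (S : {set V}) : R := g S + lam * div S.

(* OPT = max_{|S| <= k} f(S)  (f >= 0, so 0 is a neutral start) *)
Definition OPT : R := \big[Num.max/0]_(S : {set V} | (#|S| <= k)%N) fobj S.

(* C = { v in V \ S : dist(v, S) >= d }, with dist(v, emptyset) = +oo;
   dist(v,S) = min_{u in S} dist(v,u) >= d  iff  every u in S has dist v u >= d *)
Definition cand (d : R) (S : {set V}) : {set V} :=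
  [set v | (v \notin S) && [forall u in S, d <= dist v u]].

Definition gain (S : {set V}) (v : V) : R := g (v |: S) - g S.

(* Nondeterministic execution of GreedyIndependentSet(V,g,d,k) (arbitrary
   tie-breaking).  [gis_exec d i S out q]: starting from current set S with
   i loop iterations remaining, the run returns [out] having made [q] value
   oracle queries to g.  Query accounting: an iteration with candidate set C
   evaluates g(S) and g(S ∪ {v}) for every v in C, i.e. |C|+1 queries;
   computing C itself only uses dist (no g queries). *)
Inductive gis_exec (d : R) : nat -> {set V} -> {set V} -> nat -> Prop :=
| gis_done S : gis_exec d 0 S S 0
| gis_stop i S : cand d S = set0 -> gis_exec d i.+1 S S 0
| gis_pick i S t out q :
    t \in cand d S ->
    (forall v, v \in cand d S -> gain S v <= gain S t) ->
    gis_exec d i (t |: S) out q ->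
    gis_exec d i.+1 S out (q + #|cand d S| + 1).

(* The loop "for each d in D: T <- GIS(V,g,d,k); if f(T) >= f(S) then S <- T",
   over the thresholds in the list ds (in that order).  Each comparison
   f(T) >= f(S) costs 2 queries (g(T), g(S)). *)
Inductive gist_loop : seq R -> {set V} -> {set V} -> nat -> Prop :=
| gl_nil S : gist_loop [::] S S 0
| gl_cons d ds S T qT out q :
    gis_exec d k set0 T qT ->
    gist_loop ds (if fobj S <= fobj T then T else S) out q ->
    gist_loop (d :: ds) S out (qT + 2 + q).

(* D = { (1+eps)^i * eps*dmax/2 : i in N, (1+eps)^i <= 2/eps }, enumerated in
   increasing order of i; N is the number of such i (they form a prefix of N
   since 1+eps > 1). *)
Definition gist_exec (eps : R) (S : {set V}) (q : nat) : Prop :=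
  exists (S0 : {set V}) (q0 : nat) (u v : V) (N : nat) (q1 : nat),
    [/\ gis_exec 0 k set0 S0 q0,
        dist u v = dmax,
        (forall i : nat, ((1 + eps) ^+ i <= 2 / eps) <-> (i < N)%N),
        gist_loop [seq (1 + eps) ^+ i * (eps * dmax / 2) | i <- iota 0 N]
          (if (fobj S0 < fobj [set u; v]) && (2 <= k)%N then [set u; v] else S0)
          S q1 &
        q = (q0 + 2 + q1)%N].

End MDMS.

From HB Require Import structures.
From mathcomp Require Import all_boot all_order all_algebra.
From mathcomp Require Import reals.
From mathcomp Require exp.
From mathcomp Require Import lra zify.
Import Order.TTheory GRing.Theory Num.Theory.
Local Open Scope ring_scope.
Set Implicit Arguments. Unset Strict Implicit. Unset Printing Implicit Defensive.

(* Greedy selection restricted to d-separated candidates keeps half of g(A)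
   for every 2d-separated A with |A| <= k: each greedy pick t can remove at
   most one point of A from the candidates, and that point's gain is at most
   the gain of t, so submodularity charges g(A) to twice g of the output.
   For an optimal A, if div(A) >= eps dmax the geometric grid of thresholds
   contains a d with 2d <= div(A) <= 2(1+eps)d, and the run at d is worth at
   least g(A)/2 + lam div(A)/(2(1+eps)); otherwise div(A) < eps dmax, so the
   diametral pair (worth lam dmax) and the unconstrained greedy run (worth
   g(A)/2) together dominate (1/2 - eps) f(A).  Each run costs k(n+1)+2
   queries and the grid has O(log_{1+eps}(1/eps)) thresholds. *)

Section GeometricScale.
Variable R : realType.
Implicit Types (e r x eps dm : R).

Lemma bernoulli_ineq e n : 0 <= e -> 1 + n%:R * e <= (1 + e) ^+ n.
Proof.
move=> e0; elim: n => [|n IH]; first by rewrite mul0r addr0 expr0.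
rewrite exprS -natr1.
have : 0 <= (1 + e) ^+ n by apply: exprn_ge0; lra.
have : 0 <= n%:R * e :> R by apply: mulr_ge0.
nra.
Qed.

Lemma expr_unbounded r x : 1 < r -> exists n, x < r ^+ n.
Proof.
move=> r1; set e := r - 1; have e0 : 0 < e by rewrite subr_gt0.
have [n xn] : exists n : nat, `|x| / e < n%:R.
  by exists (Num.Def.archi_bound (`|x| / e)); apply/archi_boundP/divr_ge0/ltW.
exists n; have := bernoulli_ineq n (ltW e0); rewrite [X in _ <= X ^+ _]addrC subrK.
have : `|x| < n%:R * e by rewrite -ltr_pdivrMr.
have := ler_norm x; lra.
Qed.

Lemma expr_le_prefix r b : 1 < r ->
  exists N, forall i, r ^+ i <= b <-> (i < N)%N.
Proof.
move=> r1; have [n bn] := expr_unbounded b r1.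
have [N bN Nmin] := ex_minnP (ex_intro (fun n => b < r ^+ n) n bn).
exists N => i; split => [ib|iN].
- rewrite ltnNge; apply/negP => /(ler_weXn2l (ltW r1)); lra.
- by rewrite leNgt; apply/negP => /Nmin; rewrite leqNgt iN.
Qed.

Lemma expr_bracket r x : 1 < r -> 1 <= x ->
  exists i, r ^+ i <= x < r ^+ i.+1.
Proof.
move=> r1 x1; have [n xn] := expr_unbounded x r1.
elim: n xn => [|n IH] xn; first by move: xn; rewrite expr0; lra.
by case: (lerP (r ^+ n) x) => [rx|]; [exists n; apply/andP | exact: IH].
Qed.

Lemma expr_le_count r b n : 1 < r -> r ^+ n <= b ->
  n%:R <= exp.ln b / exp.ln r.
Proof.
move=> r1 rb; have r0 : 0 < r by lra.
have ln0 : 0 < exp.ln r by apply: exp.ln_gt0.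
have rn0 : 0 < r ^+ n by apply: exprn_gt0.
rewrite ler_pdivlMr // mulr_natl -exp.lnXn //.
by rewrite exp.ler_ln ?posrE //; lra.
Qed.

Lemma threshold_bracket eps dm x : 0 < eps -> eps <= 2 -> 0 <= dm ->
  eps * dm <= x <= dm ->
  exists i, (1 + eps) ^+ i <= 2 / eps /\
    (1 + eps) ^+ i * (eps * dm / 2) <= x / 2
      <= (1 + eps) * ((1 + eps) ^+ i * (eps * dm / 2)).
Proof.
move=> e0 e2 dm0 /andP[lo hi]; have [dm_eq0|dm_gt0] := eqVneq dm 0.
  have x0 : x = 0 by move: lo hi; rewrite dm_eq0 mulr0; lra.
  exists 0%N; split; first by rewrite expr0 ler_pdivlMr // mul1r.
  by rewrite x0 dm_eq0 !(mulr0, mul0r) lexx.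
have edm : 0 < eps * dm by rewrite mulr_gt0 // lt_def dm_gt0.
have x1 : 1 <= x / (eps * dm) by rewrite ler_pdivlMr // mul1r.
have r1 : 1 < 1 + eps by lra.
have [i /andP[ri ri1]] := expr_bracket r1 x1.
have ri0 : 0 <= (1 + eps) ^+ i by apply: exprn_ge0; lra.
move: ri ri1; rewrite ler_pdivlMr // ltr_pdivrMr // exprS => ri ri1.
exists i; split; last by apply/andP; split; nra.
rewrite ler_pdivlMr //; nra.
Qed.

Lemma grid_size_le eps N : 0 < eps -> eps < 1 / 2 ->
  (forall i, (i < N)%N -> (1 + eps) ^+ i <= 2 / eps) ->
  N.+1%:R <= 4 * (exp.ln (1 / eps) / exp.ln (1 + eps)).
Proof.
move=> e0 e_small grid.
have ln_r : 0 < exp.ln (1 + eps) by apply: exp.ln_gt0; lra.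
have inv_e : 2 <= 1 / eps by rewrite ler_pdivlMr //; lra.
have ln2_ge0 : 0 <= exp.ln (2 : R) by apply: exp.ln_ge0; lra.
have ln2_le : exp.ln 2 <= exp.ln (1 / eps) by rewrite exp.ler_ln ?posrE //; lra.
have L1 : 1 <= exp.ln (1 / eps) / exp.ln (1 + eps).
  by rewrite ler_pdivlMr // [X in X <= _]mul1r exp.ler_ln ?posrE //; lra.
case: N grid => [|N] grid; first lra.
have r1 : 1 < 1 + eps by lra.
have := expr_le_count r1 (grid N (ltnSn N)).
have -> : 2 / eps = 2 * (1 / eps) by rewrite mul1r.
rewrite exp.lnM ?posrE ?divr_gt0 // mulrDl.
have : exp.ln 2 / exp.ln (1 + eps) <= exp.ln (1 / eps) / exp.ln (1 + eps).
  by rewrite ler_wpM2r // invr_ge0 ltW.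
rewrite -!natr1; lra.
Qed.

End GeometricScale.

Section Metric.
Variables (R : realType) (V : finType) (dist : V -> V -> R).
Hypothesis dist_metric : is_metric dist.

Definition separated (d : R) (A : {set V}) : Prop :=
  forall a b, a \in A -> b \in A -> a != b -> d <= dist a b.

Lemma distC x y : dist x y = dist y x.
Proof. by case: dist_metric. Qed.

Lemma dist_triangle x y z : dist x z <= dist x y + dist y z.
Proof. by case: dist_metric. Qed.

Lemma distxx x : dist x x = 0.
Proof. by case: dist_metric => /(_ x x) [_ ->]. Qed.

Lemma dist_ge0 x y : 0 <= dist x y.
Proof. have := dist_triangle x y x; rewrite distxx (distC y x); lra. Qed.

Lemma dist_le_dmax u v : dist u v <= dmax dist.
Proof.
apply: le_trans (le_bigmax 0 (fun u => \big[Num.max/0]_(v : V) dist u v) u).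
exact: (le_bigmax 0 (dist u) v).
Qed.

Lemma dmax_ge0 : 0 <= dmax dist.
Proof.
have max_ge0 (x y : R) : 0 <= x -> 0 <= y -> 0 <= Num.max x y.
  by move=> x0 _; rewrite le_max x0.
apply: (big_ind (fun x => 0 <= x)) => // u _.
by apply: (big_ind (fun x => 0 <= x)) => // v _; apply: dist_ge0.
Qed.

Lemma div_ge d (S : {set V}) : d <= dmax dist -> separated d S -> d <= div dist S.
Proof.
move=> d_dm Ssep; rewrite /div; case: ifP => // _.
apply: le_bigmin => // a aS; apply: le_bigmin => // b /andP[bS ba].
by apply: Ssep; rewrite // eq_sym.
Qed.

Lemma separated_div (S : {set V}) : separated (div dist S) S.
Proof.
move=> a b aS bS ab.
have S2 : (2 <= #|S|)%N.
  have <- : #|[set a; b]| = 2%N by rewrite cards2 ab.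
  apply/subset_leq_card/subsetP => x.
  by rewrite !inE => /orP[]/eqP->.
rewrite /div S2 (bigD1 a) //= ge_min (bigD1 b) /= ?bS ?(eq_sym b) ?ab //.
by rewrite ge_min lexx.
Qed.

Lemma div_le_dmax (S : {set V}) : div dist S <= dmax dist.
Proof. by rewrite /div; case: ifP => // _; apply: bigmin_le_id. Qed.

Lemma div_ge0 (S : {set V}) : 0 <= div dist S.
Proof. by apply: div_ge; [exact: dmax_ge0 | move=> *; exact: dist_ge0]. Qed.

Lemma div_lt2 (S : {set V}) : (#|S| < 2)%N -> div dist S = dmax dist.
Proof. by rewrite /div ltnNge => /negPf ->. Qed.

Lemma div_diametral u v : dist u v = dmax dist -> dmax dist <= div dist [set u; v].
Proof.
move=> uv; apply: div_ge => // a b.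
by rewrite !inE => /orP[]/eqP-> /orP[]/eqP->; rewrite ?eqxx // => _;
  rewrite ?(distC v u) uv.
Qed.

Lemma exists_diametral : (0 < #|V|)%N -> exists u v, dist u v = dmax dist.
Proof.
move=> /card_gt0P [u0 _].
set F := fun u => \big[Num.max/0]_(v : V) dist u v.
have [u _ uF] := arg_maxP F (isT : predT u0).
have [v _ uv] := arg_maxP (dist u) (isT : predT u0).
exists u, v; apply/le_anti; rewrite dist_le_dmax /=.
apply: bigmax_le => [|w _]; first exact: dist_ge0.
apply: le_trans (uF w isT) _; apply: bigmax_le => [|x _]; first exact: dist_ge0.
exact: uv.
Qed.

End Metric.

Section Submodular.
Variables (R : realType) (V : finType) (g : {set V} -> R).
Hypotheses (g_mono : monotone_fun g) (g_submod : submodular g).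

Lemma gain_ge0 (S : {set V}) a : 0 <= gain g S a.
Proof. by rewrite /gain subr_ge0; apply/g_mono/subsetUr. Qed.

Lemma gain_subset (S T : {set V}) a : S \subset T -> gain g T a <= gain g S a.
Proof.
move=> ST; have [aT|aT] := boolP (a \in T).
  by rewrite /gain (setUidPr _) ?sub1set // subrr gain_ge0.
have := g_submod (a |: S) T.
have -> : (a |: S) :|: T = a |: T by rewrite -setUA (setUidPr ST).
have -> : (a |: S) :&: T = S.
  by rewrite setIUl (setIidPl ST) (_ : [set a] :&: T = set0) ?set0U //;
     apply/setP => x; rewrite !inE; case: eqP => // ->; rewrite (negPf aT).
rewrite /gain; lra.
Qed.

Lemma g_setU_le_gain_sum (T A : {set V}) :
  g (A :|: T) <= g T + \sum_(a in A) gain g T a.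
Proof.
elim: #|A| {-2}A (leqnn #|A|) => [|n IH] {}A An.
  by move: An; rewrite leqn0 cards_eq0 => /eqP->; rewrite set0U big_set0 addr0.
have [->|[a aA]] := set_0Vmem A; first by rewrite set0U big_set0 addr0.
have -> : A :|: T = a |: ((A :\ a) :|: T) by rewrite setUA setD1K.
rewrite (big_setD1 a aA) /=.
have := IH (A :\ a); rewrite (cardsD1 a A) aA in An => /(_ An).
have := gain_subset a (subsetUr (A :\ a) T); rewrite /gain; lra.
Qed.

End Submodular.

Section GreedyIndependentSet.
Variables (R : realType) (V : finType) (dist : V -> V -> R) (g : {set V} -> R).
Hypotheses (dist_metric : is_metric dist).
Hypotheses (g_mono : monotone_fun g) (g_submod : submodular g).
Implicit Types (d : R) (S T A : {set V}).

Local Notation cand := (cand dist).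
Local Notation gis_exec := (gis_exec dist g).

Lemma cand_set0 d : cand d set0 = setT.
Proof. by apply/setP => x; rewrite !inE; apply/forall_inP => u; rewrite inE. Qed.

Lemma gis_exec_subset d i S out q : gis_exec d i S out q -> S \subset out.
Proof. by elim=> // {}i {}S t {}out {}q _ _ _; apply/subset_trans/subsetUr. Qed.

Lemma gis_exec_card d i S out q : gis_exec d i S out q -> (#|out| <= #|S| + i)%N.
Proof.
elim=> [{}S|{}i {}S _|{}i {}S t {}out {}q _ _ _ IH]; rewrite ?addn0 ?leq_addr //.
have := cardsU1 t S; lia.
Qed.

Lemma gis_exec_queries d i S out q :
  gis_exec d i S out q -> (q <= i * (#|V| + 1))%N.
Proof.
elim=> // {}i {}S t {}out {}q _ _ _ IH.
have := max_card (cand d S); lia.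
Qed.

Lemma gis_exec_separated d i S out q :
  gis_exec d i S out q -> separated dist d S -> separated dist d out.
Proof.
elim=> // {}i {}S t {}out {}q tC _ _ IH Ssep; apply: IH; move: tC.
rewrite inE => /andP[tS /forall_inP tfar] a b.
rewrite !inE => /orP[/eqP->|aS] /orP[/eqP->|bS]; rewrite ?eqxx //.
- by move=> _; apply: tfar.
- by move=> _; rewrite distC //; apply: tfar.
- exact: Ssep.
Qed.

Lemma gis_exec_exists d i S : exists out q, gis_exec d i S out q.
Proof.
elim: i S => [|i IH] S; first by exists S, 0%N; constructor.
have [C0|[t0 t0C]] := set_0Vmem (cand d S).
  by exists S, 0%N; apply: gis_stop.
have [t tC tmax] := arg_maxP (gain g S) t0C.
have [out [q run]] := IH (t |: S).
by exists out, (q + #|cand d S| + 1)%N; apply: gis_pick tC tmax run.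
Qed.

Lemma cand_setU1 d S t x : x \in cand d S -> x \notin cand d (t |: S) ->
  x = t \/ dist x t < d.
Proof.
rewrite !inE => /andP[xS /forall_inP xfar].
rewrite negb_and negbK; have [->|xt] := eqVneq x t; first by left.
rewrite /= (negPf xS) /= => /forall_inP xnear; right.
rewrite ltNge; apply/negP => tfar; apply: xnear => u.
by rewrite !inE => /orP[/eqP->|/xfar].
Qed.

(* Adding t to S removes from the candidates at most one point of a
   2d-separated set: two removed points would both lie within d of t. *)
Lemma cand_setU1_exchange d S t A : 0 <= d ->
  A \subset cand d S -> separated dist (2 * d) A -> A != set0 ->
  exists2 a, a \in A & A :\ a \subset cand d (t |: S).
Proof.
move=> d0 AC Asep An0.
have [/exists_inP [a aA aout]|/exists_inPn Ain] :=
  boolP [exists a in A, a \notin cand d (t |: S)]; last first.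
  have /set0Pn [a aA] := An0; exists a => //.
  by apply/subsetP => b /setD1P[_ /Ain]; rewrite negbK.
exists a => //; apply/subsetP => b /setD1P[ba bA]; apply/negPn/negP => bout.
have := Asep a b aA bA; rewrite eq_sym => /(_ ba).
have := dist_triangle dist_metric a t b; rewrite (distC dist_metric t b).
case: (cand_setU1 (subsetP AC a aA) aout) => [ea|];
  case: (cand_setU1 (subsetP AC b bA) bout) => [eb|].
- by move: ba; rewrite ea eb eqxx.
- by rewrite ea distxx //; lra.
- by rewrite eb distxx //; lra.
- lra.
Qed.

Lemma gis_exec_gain_sum d i S out q A : 0 <= d -> gis_exec d i S out q ->
  A \subset cand d S -> separated dist (2 * d) A -> (#|A| <= i)%N ->
  \sum_(a in A) gain g out a <= g out - g S.
Proof.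
move=> d0 run; elim: run A.
- move=> {}S A _ _ Ai.
  by move: Ai; rewrite leqn0 cards_eq0 => /eqP->; rewrite big_set0 subrr.
- move=> {}i {}S C0 A AC _ _.
  by move: AC; rewrite C0 subset0 => /eqP->; rewrite big_set0 subrr.
move=> {}i {}S t {}out {}q tC tmax run IH A AC Asep Ai.
have Sout : S \subset out.
  by apply/(subset_trans _ (gis_exec_subset run))/subsetUr.
have [->|An0] := eqVneq A set0.
  by rewrite big_set0 subr_ge0; apply: g_mono.
have [a aA Aa_cand] := cand_setU1_exchange t d0 AC Asep An0.
have Aa_sep : separated dist (2 * d) (A :\ a).
  by move=> x y /setD1P[_ xA] /setD1P[_ yA]; apply: Asep.
have Aa_i : (#|A :\ a| <= i)%N by move: Ai; rewrite (cardsD1 a A) aA.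
have := IH _ Aa_cand Aa_sep Aa_i.
have := gain_subset g_mono g_submod a Sout.
have := tmax a (subsetP AC a aA).
rewrite (big_setD1 a aA) /gain /=; lra.
Qed.

Lemma gis_exec_half d k T q A : nonneg_fun g -> 0 <= d ->
  gis_exec d k set0 T q -> (#|A| <= k)%N -> separated dist (2 * d) A ->
  g A <= 2 * g T.
Proof.
move=> g_ge0 d0 run Ak Asep.
have := gis_exec_gain_sum d0 run (A := A); rewrite cand_set0 subsetT.
move=> /(_ isT Asep Ak).
have := g_setU_le_gain_sum g_mono g_submod T A.
have := g_mono (subsetUl A T); have := g_ge0 set0; lra.
Qed.

End GreedyIndependentSet.

Section Gist.
Variables (R : realType) (V : finType) (dist : V -> V -> R) (g : {set V} -> R).
Variables (lam : R) (k : nat).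
Implicit Types (d eps : R) (S T A : {set V}).

Local Notation f := (fobj dist g lam).
Local Notation gis_exec := (gis_exec dist g).
Local Notation gist_loop := (gist_loop dist g lam k).
Local Notation dm := (dmax dist).

Lemma gist_loop_ge ds S out q : gist_loop ds S out q -> f S <= f out.
Proof.
by elim=> // d {}ds {}S T qT {}out {}q _ _; apply: le_trans; case: ifP.
Qed.

Lemma gist_loop_ge_runs ds S out q : gist_loop ds S out q ->
  forall d, d \in ds -> exists T qT, gis_exec d k set0 T qT /\ f T <= f out.
Proof.
elim=> // d {}ds {}S T qT {}out {}q run loop IH d'.
rewrite in_cons => /orP[/eqP->|]; last exact: IH.
exists T, qT; split => //; apply: le_trans (gist_loop_ge loop).
by case: ifP => // /negbT; rewrite -ltNge => /ltW.
Qed.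

Lemma gist_loop_card ds S out q : gist_loop ds S out q ->
  (#|S| <= k)%N -> (#|out| <= k)%N.
Proof.
elim=> // d {}ds {}S T qT {}out {}q run _ IH Sk; apply: IH.
by case: ifP => // _; have := gis_exec_card run; rewrite cards0.
Qed.

Lemma gist_loop_queries ds S out q : gist_loop ds S out q ->
  (q <= size ds * (k * (#|V| + 1) + 2))%N.
Proof.
elim=> // d {}ds {}S T qT {}out {}q run _ IH.
have := gis_exec_queries run; rewrite /= mulSn.
move: (k * (#|V| + 1))%N (size ds * _)%N IH => X Y; lia.
Qed.

Lemma gist_loop_exists ds S : exists out q, gist_loop ds S out q.
Proof.
elim: ds S => [|d ds IH] S; first by exists S, 0%N; constructor.
have [T [qT run]] := gis_exec_exists dist g d k set0.
have [out [q loop]] := IH (if f S <= f T then T else S).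
by exists out, (qT + 2 + q)%N; apply: gl_cons run loop.
Qed.

Lemma gist_exec_dominates eps S q : gist_exec dist g lam k eps S q ->
  [/\ exists T0 q0, gis_exec 0 k set0 T0 q0 /\ f T0 <= f S,
      (2 <= k)%N -> exists u v, dist u v = dm /\ f [set u; v] <= f S,
      forall i, (1 + eps) ^+ i <= 2 / eps -> exists T qT,
        gis_exec ((1 + eps) ^+ i * (eps * dm / 2)) k set0 T qT /\ f T <= f S &
      (#|S| <= k)%N].
Proof.
move=> [S0 [q0 [u [v [N [q1 [run0 uv grid loop _]]]]]]].
set S1 := if _ then _ else _ in loop; have S1S := gist_loop_ge loop.
split.
- exists S0, q0; split => //; apply: le_trans S1S.
  by rewrite /S1; case: ifP => // /andP[/ltW].
- move=> k2; exists u, v; split => //; apply: le_trans S1S.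
  by rewrite /S1 k2 andbT; case: ifP => // /negbT; rewrite -leNgt.
- move=> i /grid iN; apply: (gist_loop_ge_runs loop).
  by apply: map_f; rewrite mem_iota.
- apply: (gist_loop_card loop); rewrite /S1; case: ifP => [/andP[_ k2]|_].
    by rewrite cards2; apply: leq_trans k2; case: (u != v).
  by have := gis_exec_card run0; rewrite cards0.
Qed.

Lemma gist_exec_queries eps S q : (1 <= k)%N -> gist_exec dist g lam k eps S q ->
  exists N, (q <= 4 * (#|V| * k) * N.+1)%N /\
    forall i, (i < N)%N -> (1 + eps) ^+ i <= 2 / eps.
Proof.
move=> k1 [S0 [q0 [u [v [N [q1 [run0 _ grid loop ->]]]]]]].
exists N; split; last by move=> i /grid.
have := gis_exec_queries run0; have := gist_loop_queries loop.
rewrite size_map size_iota.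
have V0 : (1 <= #|V|)%N by apply/card_gt0P; exists u.
have : (k <= #|V| * k)%N by apply: leq_pmull.
have -> : (k * (#|V| + 1) = #|V| * k + k)%N by rewrite mulnDr muln1 mulnC.
move: (#|V| * k)%N => M; nia.
Qed.

Lemma gist_exec_queries_log eps S q : (1 <= k)%N -> 0 < eps -> eps < 1 / 2 ->
  gist_exec dist g lam k eps S q ->
  q%:R <= 16 * #|V|%:R * k%:R * (exp.ln (1 / eps) / exp.ln (1 + eps)).
Proof.
move=> k1 e0 e_small /(gist_exec_queries k1) [N [qN grid]].
have NL := grid_size_le e0 e_small grid.
have nk0 : 0 <= #|V|%:R * k%:R :> R by rewrite -natrM.
apply: le_trans (_ : (4 * (#|V| * k) * N.+1)%:R <= _); first by rewrite ler_nat.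
rewrite !natrM; nra.
Qed.

Hypotheses (dist_metric : is_metric dist) (g_ge0 : nonneg_fun g).
Hypotheses (g_mono : monotone_fun g) (g_submod : submodular g) (lam_ge0 : 0 <= lam).

Lemma fobj_ge0 S : 0 <= f S.
Proof. exact: addr_ge0 (g_ge0 S) (mulr_ge0 lam_ge0 (div_ge0 dist_metric S)). Qed.

Lemma OPT_ge0 : 0 <= OPT dist g lam k.
Proof.
apply: (big_ind (fun x => 0 <= x)) => // [x y x0 _|S _]; first by rewrite le_max x0.
exact: fobj_ge0.
Qed.

Lemma gis_exec_fobj d T q A : 0 <= d <= dm -> (#|A| <= k)%N ->
  separated dist (2 * d) A -> gis_exec d k set0 T q ->
  g A / 2 + lam * d <= f T.
Proof.
move=> /andP[d0 ddm] Ak Asep run.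
have := gis_exec_half dist_metric g_mono g_submod g_ge0 d0 run Ak Asep.
have : d <= div dist T.
  apply: div_ge => //.
  by apply: (gis_exec_separated dist_metric run) => a b; rewrite inE.
move=> /(ler_wpM2l lam_ge0); rewrite /fobj; lra.
Qed.

Lemma fobj_large_div eps S A : 0 < eps -> eps <= 2 -> (#|A| <= k)%N ->
  eps * dm <= div dist A ->
  (forall i, (1 + eps) ^+ i <= 2 / eps -> exists T qT,
     gis_exec ((1 + eps) ^+ i * (eps * dm / 2)) k set0 T qT /\ f T <= f S) ->
  (1 / 2 - eps) * f A <= f S.
Proof.
move=> e0 e2 Ak large runs.
have dm0 := dmax_ge0 dist_metric.
have divA_range : eps * dm <= div dist A <= dm by rewrite large div_le_dmax.
have [i [/runs [T [qT [run TS]]] /andP[lo hi]]] :=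
  threshold_bracket e0 e2 dm0 divA_range.
set d := _ * (eps * dm / 2) in lo hi run.
have d0 : 0 <= d.
  by apply/mulr_ge0/divr_ge0 => //; [apply: exprn_ge0 | apply: mulr_ge0]; lra.
have Asep : separated dist (2 * d) A.
  by move=> a b aA bA ab; have := separated_div dist aA bA ab; lra.
have d_dm : 0 <= d <= dm by rewrite d0; lra.
have := gis_exec_fobj d_dm Ak Asep run.
have : (1 / 2 - eps) * div dist A <= d by nra.
move=> /(ler_wpM2l lam_ge0); have := mulr_ge0 (ltW e0) (g_ge0 A).
rewrite /fobj in TS *; nra.
Qed.

Lemma fobj_small_div eps S A : 0 < eps -> eps < 1 / 2 -> (#|A| <= k)%N ->
  div dist A < eps * dm ->
  (exists T0 q0, gis_exec 0 k set0 T0 q0 /\ f T0 <= f S) ->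
  ((2 <= k)%N -> exists u v, dist u v = dm /\ f [set u; v] <= f S) ->
  (1 / 2 - eps) * f A <= f S.
Proof.
move=> e0 e_small Ak small [T0 [q0 [run0 T0S]]] pair.
have dm0 := dmax_ge0 dist_metric; have divA0 := div_ge0 dist_metric A.
have A2 : (2 <= #|A|)%N.
  by rewrite leqNgt; apply/negP => /div_lt2 eq_dm; move: small; rewrite eq_dm; nra.
have [u [v [uv uvS]]] := pair (leq_trans A2 Ak).
have lam_dm : lam * dm <= f S.
  apply: le_trans uvS; rewrite /fobj.
  have := ler_wpM2l lam_ge0 (div_diametral dist_metric uv).
  have := g_ge0 [set u; v]; lra.
have A0sep : separated dist (2 * 0) A by move=> a b *; rewrite mulr0 dist_ge0.
have zero_dm : (0 : R) <= 0 <= dm by rewrite lexx dm0.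
have := gis_exec_fobj zero_dm Ak A0sep run0.
rewrite mulr0 addr0 => gA_T0.
have lam_divA : lam * div dist A <= eps * f S.
  have := ler_wpM2l lam_ge0 (ltW small); have := ler_wpM2l (ltW e0) lam_dm; nra.
have := fobj_ge0 S; have := mulr_ge0 lam_ge0 divA0; rewrite [f A]/fobj; nra.
Qed.

Lemma gist_exec_approx eps S q : 0 < eps -> gist_exec dist g lam k eps S q ->
  (#|S| <= k)%N /\ (1 / 2 - eps) * OPT dist g lam k <= f S.
Proof.
move=> e0 run; have [run0 pair runs Sk] := gist_exec_dominates run.
split => //; have [e_big|e_small] := lerP (1 / 2) eps.
  by have := OPT_ge0; have := fobj_ge0 S; nra.
have e_pos : 0 < 1 / 2 - eps by lra.
rewrite -ler_pdivlMl //; apply: bigmax_le => [|A Ak].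
  by rewrite mulr_ge0 ?invr_ge0 ?fobj_ge0 ?ltW.
rewrite ler_pdivlMl //; have [large|small] := lerP (eps * dm) (div dist A).
- by apply: fobj_large_div large runs => //; lra.
- exact: fobj_small_div small run0 pair.
Qed.

Lemma gist_exec_exists eps : 0 < eps -> (0 < #|V|)%N ->
  exists S q, gist_exec dist g lam k eps S q.
Proof.
move=> e0 V0; have [u [v uv]] := exists_diametral dist_metric V0.
have [S0 [q0 run0]] := gis_exec_exists dist g 0 k set0.
have [N grid] : exists N, forall i, (1 + eps) ^+ i <= 2 / eps <-> (i < N)%N.
  by apply: expr_le_prefix; lra.
have [S [q1 loop]] :=
  gist_loop_exists [seq (1 + eps) ^+ i * (eps * dm / 2) | i <- iota 0 N]
    (if (f S0 < f [set u; v]) && (2 <= k)%N then [set u; v] else S0).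
by exists S, (q0 + 2 + q1)%N, S0, q0, u, v, N, q1.
Qed.

End Gist.

Theorem theorem3p1 (R : realType) :
  (forall (V : finType) (dist : V -> V -> R) (g : {set V} -> R) (lam : R)
          (k : nat) (eps : R),
     is_metric dist -> nonneg_fun g -> monotone_fun g -> submodular g ->
     0 <= lam -> (1 <= k)%N -> 0 < eps ->
     ((0 < #|V|)%N -> exists S q, gist_exec dist g lam k eps S q) /\
     (forall S q, gist_exec dist g lam k eps S q ->
        (#|S| <= k)%N /\ (1 / 2 - eps) * OPT dist g lam k <= fobj dist g lam S))
  /\
  (exists (C eps0 : R), 0 < C /\ 0 < eps0 /\
     forall (V : finType) (dist : V -> V -> R) (g : {set V} -> R) (lam : R)
            (k : nat) (eps : R),
       is_metric dist -> nonneg_fun g -> monotone_fun g -> submodular g ->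
       0 <= lam -> (1 <= k)%N -> 0 < eps -> eps < eps0 ->
       forall S q, gist_exec dist g lam k eps S q ->
         (q%:R : R) <= C * (#|V|)%:R * k%:R * (exp.ln (1 / eps) / exp.ln (1 + eps))).
Proof.
split=> [V dist g lam k eps metric g_ge0 g_mono g_submod lam_ge0 k1 e0|].
  split; first exact: gist_exec_exists.
  by move=> S q; apply: gist_exec_approx.
exists 16, (1 / 2); split; first lra; split; first lra.
move=> V dist g lam k eps _ _ _ _ _ k1 e0 e_small S q.
exact: gist_exec_queries_log.
Qed.
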